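(* Let $I=(G,c,F_{\rm in},\mathcal{H},k)$ be a reduced instance of RGBP in which every habitat has at most $6$ vertices and $G$ has maximum degree at most $3$, and let $H\in\mathcal{H}$ with $|H|=6$. If $\{H,H'\}$ is an edge of the basic habitat graph $\mathcal{G}_{G,F_{\rm in},\mathcal{H}}$ for some $H'\in\mathcal{H}$, then $H'\subseteq H$.
   Context: All graphs are finite, simple and undirected. For a graph $G=(V,E)$, $H\subseteq V$ and $F\subseteq E$, let $G[H,F]$ be the graph with vertex set $H$ and edge set $\{\{u,v\}\in F\mid u,v\in H\}$, and $G[H]=G[H,E]$. A graph is 2-connected if it has at least three vertices and remains connected after deleting any single vertex. An instance of RGBP is $(G,c,F_{\rm in},\mathcal{H},k)$ with $G=(V,E)$, costs $c\colon E\to\mathbb{N}_0$, forced edges $F_{\rm in}\subseteq E$, a set $\mathcal{H}$ of subsets of $V$ (habitats) and an integer $k$; the question is whether there is $F$ with $F_{\rm in}\subseteq F\subseteq E$, $\sum_{e\in F}c(e)\leq k$ and $G[H,F]$ 2-connected for all $H\in\mathcal{H}$. The instance is reduced if none of the following rules applies: (1) some $H\in\mathcal{H}$ has $G[H]$ not 2-connected (then answer no); (2) two habitats in $\mathcal{H}$ are equal (delete one); (3) for some habitat $H$ there is an edge $e\in E(G[H])\setminus F_{\rm in}$ such that $G[H]-e$ is not 2-connected (add $e$ to $F_{\rm in}$); (4) some habitat $H$ has $G[H,F_{\rm in}]$ 2-connected (delete $H$); (5) some edge $e\in E$ lies in no $G[H]$, $H\in\mathcal{H}$ (delete $e$, and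 if $e\in F_{\rm in}$ decrease $k$ by $c(e)$). The basic habitat graph $\mathcal{G}_{G,F_{\rm in},\mathcal{H}}$ has vertex set $\mathcal{H}$ and an edge $\{H,H'\}$ whenever $(E(G[H])\cap E(G[H']))\setminus F_{\rm in}\neq\emptyset$. *)

From mathcomp Require Import all_boot all_algebra.
Set Implicit Arguments. Unset Strict Implicit. Unset Printing Implicit Defensive.

(* A finite simple graph on vertex type T is given by its edge set
   E : {set {set T}}, each edge being a 2-element vertex set. *)
Definition simple_edges (T : finType) (E : {set {set T}}) : Prop :=
  forall e, e \in E -> #|e| = 2.

Definition adjF (T : finType) (S : {set T}) (F : {set {set T}}) : rel T :=
  fun x y => [&& x \in S, y \in S & [set x; y] \in F].

Definition connectedF (T : finType) (S : {set T}) (F : {set {set T}}) : Prop :=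
  forall x y, x \in S -> y \in S -> connect (adjF S F) x y.

Definition two_connected (T : finType) (S : {set T}) (F : {set {set T}}) : Prop :=
  2 < #|S| /\ forall v, v \in S -> connectedF (S :\ v) F.

Definition induced_edges (T : finType) (E : {set {set T}}) (S : {set T}) :=
  [set e in E | e \subset S].

Definition degree (T : finType) (E : {set {set T}}) (v : T) : nat :=
  #|[set e in E | v \in e]|.

(* The instance (G=(T,E), c, Fin, Hs, k) is reduced.  Rule (2) is vacuous
   since Hs is a (finite) set. *)
Definition reduced (T : finType) (E : {set {set T}}) (c : {set T} -> nat)
  (Fin : {set {set T}}) (Hs : {set {set T}}) (k : int) : Prop :=
  [/\ (* (1) *) forall H, H \in Hs -> two_connected H E,
      (* (3) *) forall H e, H \in Hs -> e \in induced_edges E H -> e \notin Fin ->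
                  two_connected H (E :\ e),
      (* (4) *) forall H, H \in Hs -> ~ two_connected H Fin &
      (* (5) *) forall e, e \in E -> exists2 H, H \in Hs & e \subset H].

Definition habitat_adj (T : finType) (E Fin : {set {set T}}) (H H' : {set T}) : Prop :=
  H != H' /\ exists e, [/\ e \in E, e \subset H, e \subset H' & e \notin Fin].

(* Let uv be an edge outside F_in lying in both H and H'. By rule (3), G[H] - uv
   is 2-connected, so u has three neighbours in H (and likewise in H'); since the
   maximum degree is 3, all neighbours of u and v lie in K = H ∩ H'. Suppose
   H' ⊄ H; then there are w ∈ H \ H' and x ∈ H' \ H, and since G[H] and G[H'] are
   2-connected, at least two edges join R = K \ {u, v} to each of H \ H' and
   H' \ H. With the four edges from u and v into R, these must fit into the
   3|R| ≤ 9 edge ends at R, which forces |R| = 3, R independent, H = K + w,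
   H' = K + x, and one of w, x to have at most two neighbours in R. In the
   corresponding habitat every vertex other than u and v then has degree 2, so
   rule (3) forces all edges except uv into F_in, and G[H, F_in] ⊇ G[H] - uv is
   2-connected, contradicting rule (4). *)

From mathcomp Require Import all_boot all_algebra zify.
Set Implicit Arguments. Unset Strict Implicit. Unset Printing Implicit Defensive.

Lemma card_setI_sum (T : finType) (A B : {set T}) : #|A :&: B| = \sum_(y in B) (y \in A).
Proof. by rewrite -sum1_card -big_mkcondr; apply: eq_bigl => y; rewrite inE andbC. Qed.

Lemma card_setI_setU (T : finType) (N A B : {set T}) :
  #|N :&: (A :&: B)| + #|N :&: (B :\: A)| + #|N :&: (A :\: B)| = #|N :&: (A :|: B)|.
Proof.
rewrite !(setIC N) !card_setI_sum -!big_split; apply: eq_bigr => y _.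
by rewrite !inE; case: (y \in A); case: (y \in B).
Qed.

Lemma setU1_eq_card (T : finType) (K S : {set T}) o :
  K \subset S -> o \in S -> o \notin K -> #|S| <= #|K|.+1 -> o |: K = S.
Proof. by move=> KS oS oK S1; apply/eqP; rewrite eqEcard subUset sub1set oS KS cardsU1 oK. Qed.

Section Neighbourhoods.
Variables (T : finType) (E : {set {set T}}).
Implicit Types (A B : {set T}) (y z : T).

Definition nbrs (z : T) : {set T} := [set y | [set z; y] \in E].

(* For B = A this counts every edge inside A twice. *)
Definition adj_count (A B : {set T}) : nat := \sum_(z in A) #|nbrs z :&: B|.

Lemma nbrsC y z : (y \in nbrs z) = (z \in nbrs y).
Proof. by rewrite !inE setUC. Qed.

Lemma adj_countC A B : adj_count A B = adj_count B A.
Proof.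
rewrite /adj_count; under eq_bigr do rewrite card_setI_sum.
rewrite exchange_big; apply: eq_bigr => y _; rewrite card_setI_sum.
by apply: eq_bigr => z _; rewrite nbrsC.
Qed.

Lemma adj_count1 z B : adj_count [set z] B = #|nbrs z :&: B|.
Proof. exact: big_set1. Qed.

Lemma adj_countU1 z A B : z \notin A -> adj_count (z |: A) B = #|nbrs z :&: B| + adj_count A B.
Proof. exact: big_setU1. Qed.

Lemma adj_countD1 z A B : z \in A -> adj_count A B = #|nbrs z :&: B| + adj_count (A :\ z) B.
Proof. exact: big_setD1. Qed.

Hypothesis simpleE : simple_edges E.

Lemma nbrs_irr z : z \notin nbrs z.
Proof. by rewrite inE setUid; apply/negP => /simpleE; rewrite cards1. Qed.

Lemma card_nbrs_le_degree z : #|nbrs z| <= degree E z.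
Proof.
have edge_inj : {in nbrs z &, injective (fun y => [set z; y])}.
  move=> y1 y2 y1z y2z e12; apply/set1_inj.
  have notin_set1 y : y \in nbrs z -> z \notin [set y].
    by rewrite in_set1; apply: contraL => /eqP <-; apply: nbrs_irr.
  by rewrite -(setU1K (notin_set1 _ y1z)) -(setU1K (notin_set1 _ y2z)) e12.
rewrite -(card_in_imset edge_inj); apply: subset_leq_card.
apply/subsetP => _ /imsetP [y yN ->]; rewrite inE in yN.
by rewrite inE yN set21.
Qed.

Lemma adj_count_neq1 A : adj_count A A != 1.
Proof.
apply/eqP => sum1.
have [z zA] : exists2 z, z \in A & 0 < #|nbrs z :&: A|.
  apply/exists_inP; apply: contra_eqT sum1 => /exists_inPn none.
  by rewrite /adj_count big1 // => z /none; rewrite lt0n negbK => /eqP.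
rewrite card_gt0 => /set0Pn [y /setIP [yz yA]].
have yAz : y \in A :\ z by rewrite in_setD1 yA andbT; apply: contraTneq yz => ->; apply: nbrs_irr.
have zy : 0 < #|nbrs y :&: A| by rewrite card_gt0; apply/set0Pn; exists z; rewrite inE -nbrsC yz.
have yz0 : 0 < #|nbrs z :&: A| by rewrite card_gt0; apply/set0Pn; exists y; rewrite inE yz.
by move: sum1; rewrite (adj_countD1 _ zA) (adj_countD1 _ yAz); lia.
Qed.

End Neighbourhoods.

Section TwoConnected.
Variable T : finType.
Implicit Types (F : {set {set T}}) (S K : {set T}).

Lemma connect_exit (r : rel T) (A : {set T}) x y :
  connect r x y -> x \in A -> y \notin A -> exists a b, [/\ r a b, a \in A & b \notin A].
Proof.
move=> /connectP [p + ->] {y}; elim: p x => [|z p IHp] x /=; first by move=> _ ->.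
move=> /andP [xz zp] xA; case: (boolP (z \in A)) => [zA | zA _]; first exact: IHp.
by exists x, z.
Qed.

Lemma two_connected_sub S F F' :
  (forall a b, a \in S -> b \in S -> [set a; b] \in F -> [set a; b] \in F') ->
  two_connected S F -> two_connected S F'.
Proof.
move=> FF' [S3 connS]; split=> // v vS a b aS bS.
apply: connect_sub (connS v vS a b aS bS) => p q /and3P [pSv qSv pqF].
have SvS := subsetP (subsetDl S [set v]).
by apply: connect1; rewrite /adjF pSv qSv FF' // SvS.
Qed.

Section Exits.
Variables (S K : {set T}) (F : {set {set T}}) (o : T).
Hypotheses (connS : two_connected S F) (KS : K \subset S) (K2 : 1 < #|K|) (oSK : o \in S :\: K).

Lemma exists_exit_neq r : r \in K ->
  exists2 a, a \in K :\ r & nbrs F a :&: (S :\: K) != set0.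
Proof.
move=> rK; have [z [zK zr]] : exists z, z \in K /\ z != r.
  have /card_gt1P [z1 [z2 [z1K z2K z12]]] := K2.
  by case: (eqVneq z1 r) => [z1r | ]; [exists z2; rewrite -z1r eq_sym | exists z1].
have [oS oK] := setDP oSK.
have inSr t : t \in S -> t != r -> t \in S :\ r by move=> tS tr; rewrite in_setD1 tr.
have or : o != r by apply: contraNneq oK => ->.
have rzo := connS.2 r (subsetP KS r rK) z o (inSr z (subsetP KS z zK) zr) (inSr o oS or).
have [a [b [/and3P [aSr bSr abF] aK bK]]] := connect_exit rzo zK oK.
move: aSr bSr; rewrite !in_setD1 => /andP [ar _] /andP [_ bS].
by exists a; rewrite ?in_setD1 ?ar //; apply/set0Pn; exists b; rewrite !inE abF bS bK.
Qed.

Lemma adj_count_exits_gt1 : 1 < adj_count F K (S :\: K).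
Proof.
have /card_gt0P [r rK] : 0 < #|K| by lia.
have [a /setD1P [_ aK] aexit] := exists_exit_neq rK.
have [b bKa bexit] := exists_exit_neq aK.
rewrite (adj_countD1 _ _ aK) (adj_countD1 _ _ bKa).
by move: aexit bexit; rewrite -!card_gt0; lia.
Qed.

End Exits.

Lemma two_connected_min_degree S F z : two_connected S F -> z \in S ->
  1 < #|nbrs F z :&: S|.
Proof.
move=> connS zS; have S3 := connS.1.
(* Inside S, the edges leaving S :\ z are exactly the edges at z. *)
have zSz : z \in S :\: (S :\ z) by rewrite !inE eqxx zS.
have Sz2 : 1 < #|S :\ z| by move: S3; rewrite (cardsD1 z S) zS; lia.
have := adj_count_exits_gt1 connS (subsetDl S [set z]) Sz2 zSz.
rewrite setDDr setDv set0U (setIidPr _) ?sub1set // adj_countC adj_count1.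
by move/leq_trans; apply; apply/subset_leq_card/setIS/subsetDl.
Qed.

Lemma two_connected_delete_edge S F a b : two_connected S (F :\ [set a; b]) ->
  a \in S -> b \in S -> [set a; b] \in F -> 2 < #|nbrs F a :&: S|.
Proof.
move=> connS aS bS abF; have := two_connected_min_degree connS aS.
have bN : b \in nbrs F a :&: S by rewrite !inE abF bS.
rewrite (cardsD1 b (nbrs F a :&: S)) bN add1n ltnS => /leq_trans; apply.
apply/subset_leq_card/subsetP => y; rewrite !inE => /andP [/andP [ayab ayF] yS].
by rewrite ayF yS !andbT; apply: contraNneq ayab => ->.
Qed.

End TwoConnected.

Section ReducedInstance.
Variables (T : finType) (E : {set {set T}}) (c : {set T} -> nat).
Variables (Fin Hs : {set {set T}}) (k : int).
Hypotheses (simpleE : simple_edges E) (red : reduced E c Fin Hs k).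
Hypothesis deg3 : forall v, degree E v <= 3.

Lemma habitat_two_connected S : S \in Hs -> two_connected S E.
Proof. by case: red => + _ _ _; apply. Qed.

Lemma card_nbrs_le3 z : #|nbrs E z| <= 3.
Proof. exact: leq_trans (card_nbrs_le_degree simpleE z) (deg3 z). Qed.

Lemma unforced_edge_degree S a b : S \in Hs -> a \in S -> b \in S ->
  [set a; b] \in E -> [set a; b] \notin Fin -> 2 < #|nbrs E a :&: S|.
Proof.
case: red => _ rule3 _ _ SHs aS bS abE abFin.
have abS : [set a; b] \in induced_edges E S by rewrite inE abE subUset !sub1set aS bS.
exact: two_connected_delete_edge (rule3 S _ SHs abS abFin) aS bS abE.
Qed.

Lemma unforced_edge_nbrs S a b : S \in Hs -> a \in S -> b \in S ->
  [set a; b] \in E -> [set a; b] \notin Fin -> nbrs E a \subset S /\ #|nbrs E a| = 3.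
Proof.
move=> SHs aS bS abE abFin; have aS3 := unforced_edge_degree SHs aS bS abE abFin.
have aSa : #|nbrs E a :&: S| <= #|nbrs E a| by apply/subset_leq_card/subsetIl.
have a3 := card_nbrs_le3 a.
split; last by lia.
have /eqP <- : nbrs E a :&: S == nbrs E a by rewrite eqEcard subsetIl /=; lia.
exact: subsetIr.
Qed.

Lemma sparse_habitat_contra S u v : S \in Hs -> u \in S -> v \in S ->
  [set u; v] \in E -> [set u; v] \notin Fin ->
  (forall y, y \in S -> y \notin [set u; v] -> #|nbrs E y :&: S| <= 2) -> False.
Proof.
move=> SHs uS vS uvE uvFin sparse; case: red => _ rule3 rule4 _; apply: (rule4 S SHs).
have uvS : [set u; v] \in induced_edges E S by rewrite inE uvE subUset !sub1set uS vS.
apply: two_connected_sub (rule3 S _ SHs uvS uvFin) => a b aS bS /setD1P [abuv abE].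
(* An unforced edge would give both its ends degree at least 3 in S. *)
have uv_end y z : y \in S -> z \in S -> [set y; z] \in E -> [set y; z] \notin Fin ->
    y \in [set u; v].
  move=> yS zS yzE yzFin; apply: contraTT (unforced_edge_degree SHs yS zS yzE yzFin).
  by move=> yuv; rewrite -leqNgt sparse.
apply: contraR abuv => abFin.
have baE : [set b; a] \in E by rewrite setUC.
have baFin : [set b; a] \notin Fin by rewrite setUC.
rewrite eqEcard subUset !sub1set (uv_end a b) // (uv_end b a) // (simpleE abE).
by rewrite /= cards2 ltnS leq_b1.
Qed.

Section OverlappingHabitats.
Variables (H H' : {set T}) (u v : T).
Hypotheses (HHs : H \in Hs) (H'Hs : H' \in Hs).
Hypotheses (uvE : [set u; v] \in E) (uvFin : [set u; v] \notin Fin).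
Hypotheses (uK : u \in H :&: H') (vK : v \in H :&: H').

Local Notation K := (H :&: H').
Local Notation R := (K :\ u :\ v).

Let vuE : [set v; u] \in E. Proof. by rewrite setUC. Qed.
Let vuFin : [set v; u] \notin Fin. Proof. by rewrite setUC. Qed.
Let vKu : v \in K :\ u.
Proof.
by rewrite in_setD1 vK andbT eq_sym; have := simpleE uvE; rewrite cards2; case: (u != v).
Qed.
Let RK : R \subset K. Proof. exact: subset_trans (subsetDl _ _) (subsetDl _ _). Qed.

Lemma overlap_edge_nbrs a b : a \in K -> b \in K ->
  [set a; b] \in E -> [set a; b] \notin Fin -> nbrs E a \subset K /\ #|nbrs E a| = 3.
Proof.
move=> /setIP [aH aH'] /setIP [bH bH'] abE abFin.
have [NaH Na3] := unforced_edge_nbrs HHs aH bH abE abFin.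
have [NaH' _] := unforced_edge_nbrs H'Hs aH' bH' abE abFin.
by rewrite subsetI NaH NaH'.
Qed.

Let NuK : nbrs E u \subset K. Proof. exact: (overlap_edge_nbrs uK vK uvE uvFin).1. Qed.
Let NvK : nbrs E v \subset K. Proof. exact: (overlap_edge_nbrs vK uK vuE vuFin).1. Qed.

Lemma card_nbrs_overlap_rest a b : a \in K -> b \in K ->
  [set a; b] \in E -> [set a; b] \notin Fin -> #|nbrs E a :&: (K :\ a :\ b)| = 2.
Proof.
move=> aK bK abE abFin; have [NaK Na3] := overlap_edge_nbrs aK bK abE abFin.
have bNa : b \in nbrs E a by rewrite inE.
have -> : nbrs E a :&: (K :\ a :\ b) = nbrs E a :\ b.
  apply/setP => t; rewrite in_setI !in_setD1.
  case: (boolP (t \in nbrs E a)) => tNa; last by rewrite andbF.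
  have ta : t != a by apply: contraTneq tNa => ->; apply: nbrs_irr.
  by rewrite ta (subsetP NaK t tNa) !andbT.
by move: Na3; rewrite (cardsD1 b) bNa => -[].
Qed.

Lemma card_overlap : #|K| = #|R| + 2.
Proof. by rewrite (cardsD1 u K) uK (cardsD1 v (K :\ u)) vKu addnA addnC. Qed.

Lemma adj_count_overlap B :
  adj_count E K B = #|nbrs E u :&: B| + #|nbrs E v :&: B| + adj_count E R B.
Proof. by rewrite (adj_countD1 _ _ uK) (adj_countD1 _ _ vKu) addnA. Qed.

Lemma adj_count_overlap_rest : adj_count E K R = 4 + adj_count E R R.
Proof.
have Rvu : K :\ v :\ u = R by rewrite !setDDl setUC.
have := card_nbrs_overlap_rest vK uK vuE vuFin; rewrite Rvu => Nv2.
by rewrite adj_count_overlap (card_nbrs_overlap_rest uK vK uvE uvFin) Nv2.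
Qed.

Lemma adj_count_rest_exits S o : S \in Hs -> K \subset S -> o \in S :\: K ->
  1 < adj_count E R (S :\: K).
Proof.
move=> SHs KS oSK.
have K2 : 1 < #|K| by rewrite card_overlap addn2.
have := adj_count_exits_gt1 (habitat_two_connected SHs) KS K2 oSK.
have no_exit a : nbrs E a \subset K -> #|nbrs E a :&: (S :\: K)| = 0.
  move=> NaK; apply/eqP; rewrite cards_eq0 setI_eq0 disjoints_subset setDE setCI setCK.
  exact: subset_trans NaK (subsetUr _ _).
by rewrite adj_count_overlap (no_exit u NuK) (no_exit v NvK).
Qed.

Lemma sparse_extension_contra S o : S \in Hs -> o \notin K -> S = o |: K ->
  #|R| = 3 -> adj_count E R R = 0 -> #|nbrs E o :&: R| <= 2 -> False.
Proof.
move=> SHs oK defS R3 R0 oR2.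
have KS : K \subset S by rewrite defS subsetUr.
apply: (sparse_habitat_contra SHs (subsetP KS u uK) (subsetP KS v vK) uvE uvFin).
move=> y yS yuv; case: (eqVneq y o) => [-> | yo].
  apply/(leq_trans _ oR2)/subset_leq_card/subsetP => t /setIP [tNo tS].
  have tK : t \in K.
    move: tS; rewrite defS in_setU1 => /predU1P [to | //].
    by move: tNo; rewrite to (negbTE (nbrs_irr simpleE o)).
  have not_end a : nbrs E a \subset K -> t != a.
    by move=> NaK; apply: contraNneq oK => ta; apply: (subsetP NaK); rewrite nbrsC -ta.
  by rewrite inE tNo !in_setD1 tK (not_end u NuK) (not_end v NvK).
have yR : y \in R.
  move: yS yuv; rewrite defS in_setU1 (negbTE yo) !in_setD1 !inE negb_or /=.
  by move=> yK /andP [yu yv]; rewrite yu yv yK.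
have sumS : adj_count E R S = #|nbrs E o :&: R| + 4.
  by rewrite adj_countC defS adj_countU1 // adj_count_overlap_rest R0.
have R2 : #|R :\ y| = 2 by move: R3; rewrite (cardsD1 y) yR => -[].
have lower : #|nbrs E y :&: S| + 4 <= adj_count E R S.
  rewrite (adj_countD1 _ _ yR) leq_add2l.
  apply: leq_trans (_ : #|R :\ y| * 2 <= _); first by rewrite R2.
  rewrite -sum_nat_const; apply: leq_sum => z /setD1P [_ zR].
  apply: two_connected_min_degree (habitat_two_connected SHs) _.
  by rewrite (subsetP KS) // (subsetP RK).
by move: lower; rewrite sumS leq_add2r => /leq_trans; apply.
Qed.

Section PrivateVertices.
Variables (w x : T).
Hypotheses (wH : w \in H :\: H') (xH' : x \in H' :\: H).
Hypotheses (H6 : #|H| <= 6) (H'6 : #|H'| <= 6).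

Lemma overlap_counting :
  [/\ #|R| = 3, adj_count E R R = 0 & #|nbrs E w :&: R| + #|nbrs E x :&: R| <= 5].
Proof.
have bound : adj_count E R K + adj_count E R (H' :\: H) + adj_count E R (H :\: H') <= #|R| * 3.
  rewrite /adj_count -!big_split -sum_nat_const; apply: leq_sum => z _ /=.
  by rewrite card_setI_setU; apply: leq_trans (card_nbrs_le3 z); apply/subset_leq_card/subsetIl.
have inner : adj_count E R K = 4 + adj_count E R R by rewrite adj_countC adj_count_overlap_rest.
have exitH' : 1 < adj_count E R (H' :\: H).
  have H'K : H' :\: K = H' :\: H by rewrite setDIr setDv setU0.
  have xK : x \in H' :\: K by rewrite H'K.
  by rewrite -H'K; apply: adj_count_rest_exits H'Hs (subsetIr H H') xK.
have exitH : 1 < adj_count E R (H :\: H').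
  have HK : H :\: K = H :\: H' by rewrite setDIr setDv set0U.
  have wK : w \in H :\: K by rewrite HK.
  by rewrite -HK; apply: adj_count_rest_exits HHs (subsetIl H H') wK.
have xle : #|nbrs E x :&: R| <= adj_count E R (H' :\: H).
  by rewrite adj_countC (adj_countD1 _ _ xH') leq_addr.
have wle : #|nbrs E w :&: R| <= adj_count E R (H :\: H').
  by rewrite adj_countC (adj_countD1 _ _ wH) leq_addr.
have K5 : #|K| <= 5.
  have [wH1 wH'] := setDP wH.
  have KHw : K \subset H :\ w.
    apply/subsetP => t /setIP [tH tH']; rewrite in_setD1 tH andbT.
    by apply: contraTneq tH' => ->.
  by move: H6 (subset_leq_card KHw); rewrite (cardsD1 w H) wH1; clear; lia.
have R01 := adj_count_neq1 simpleE R; have cardK := card_overlap.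
by split; clear -cardK bound inner exitH' exitH xle wle K5 R01; lia.
Qed.

Lemma private_vertices_contra : False.
Proof.
have [R3 R0 wx5] := overlap_counting.
have [[wH1 wH'] [xH'1 xH]] := (setDP wH, setDP xH').
have K5 : #|K| = 5 by rewrite card_overlap R3.
have wK : w \notin K by rewrite in_setI negb_and wH' orbT.
have xK : x \notin K by rewrite in_setI negb_and xH.
have defH : H = w |: K by rewrite (setU1_eq_card (subsetIl H H') wH1 wK) ?K5.
have defH' : H' = x |: K by rewrite (setU1_eq_card (subsetIr H H') xH'1 xK) ?K5.
case: (leqP #|nbrs E w :&: R| 2) => [wR | wR].
  exact: sparse_extension_contra HHs wK defH R3 R0 wR.
by apply: (sparse_extension_contra H'Hs xK defH' R3 R0); move: wx5 wR; clear; lia.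
Qed.

End PrivateVertices.

End OverlappingHabitats.

End ReducedInstance.

Theorem lemma15 (T : finType) (E : {set {set T}}) (c : {set T} -> nat)
  (Fin Hs : {set {set T}}) (k : int) :
  simple_edges E -> Fin \subset E ->
  reduced E c Fin Hs k ->
  (forall H, H \in Hs -> #|H| <= 6) ->
  (forall v, degree E v <= 3) ->
  forall H H', H \in Hs -> H' \in Hs -> #|H| = 6 ->
  habitat_adj E Fin H H' -> H' \subset H.
Proof.
move=> simpleE _ red Hs6 deg3 H H' HHs H'Hs cardH [neqHH' [e [eE eH eH' eFin]]].
have /cards2P [u [v [_ defe]]] : #|e| == 2 by rewrite simpleE.
rewrite {e}defe in eE eH eH' eFin.
have : [set u; v] \subset H :&: H' by rewrite subsetI eH eH'.
rewrite subUset !sub1set => /andP [uK vK].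
have /set0Pn [w wH] : H :\: H' != set0.
  by rewrite setD_eq0; apply: contra neqHH' => HH'; rewrite eqEcard HH' cardH Hs6.
apply/negPn/negP; rewrite -setD_eq0 => /set0Pn [x xH'].
apply: (private_vertices_contra simpleE red deg3 HHs H'Hs eE eFin uK vK wH xH').
- exact: Hs6 H HHs.
- exact: Hs6 H' H'Hs.
Qed.
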